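(* Let $M\subseteq[r]^d$ be a dot array satisfying (P2), (P3) and (P4). Then $M$ is a totally rankable dot array of rank $r$.
   Context: $[r]=\{0,\dots,r\}$; a dot array is a subset of $[r]^d$, partially ordered coordinatewise with meet $\mathbf x\wedge\mathbf y=(\min(x_i,y_i))_i$. Rankability. Let $\mathrm{rk}_iP$ be one less than the number of distinct $i$-th coordinates among elements of $P$. $P$ is rankable of rank $s$ if $\mathrm{rk}_iP=s$ for all $i$. $P$ is totally rankable if every principal subarray $P[\mathbf x]=\{\mathbf y\in P:\mathbf y\succeq\mathbf x\}$, $\mathbf x\in[r]^d$, is rankable. Its rank is the rank of $P$ itself. Subarrays. A $[k]^d$-subarray of $M$ is $M\cap(A_1\times\dots\times A_d)$ with $A_i\subseteq[r]$ and $|A_i|=k+1$. It is regarded as a dot array in $[k]^d$ via the order-preserving bijections $A_i\to[k]$. Properties of a dot array $M\subseteq[r]^d$: (P1) $M$ is closed under $\wedge$. (P2) for every $j$ and every $c\in[r]$ some $\mathbf w\in M$ has $w_j=c$. (P3) every set $S$ of $r+2$ elements of $M$ contains a subset $S'$ (with at least two elements) such that for every $i$ the value $\min\{x_i:\mathbf x\in S'\}$ is attained by at least two elements of $S'$. (P4) (recursive in $r$; vacuous for $r=0$) for every $0\le k\le r-1$ and every set $N$ of $k+1$ elements of $M$, there is a $[k]^d$-subarray $M'$ of $M$ containing $N$ which, as a dot array in $[k]^d$, satisfies (P1), (P2), (P3), (P4) with $r$ replaced by $k$. *)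

From mathcomp Require Import all_boot all_order all_algebra.
Set Implicit Arguments. Unset Strict Implicit. Unset Printing Implicit Defensive.
Import GRing.Theory.

(* Points of [r]^d = {0..r}^d, as finite functions 'I_d -> 'I_(r+1). *)
Definition pt (d r : nat) := {ffun 'I_d -> 'I_r.+1}.

Definition ple d r (x y : pt d r) : bool := [forall i, (x i <= y i)%N].

Definition meet d r (x y : pt d r) : pt d r :=
  [ffun i => if (x i <= y i)%N then x i else y i].

Definition P1 d r (M : {set pt d r}) : Prop :=
  forall x y, x \in M -> y \in M -> meet x y \in M.

Definition P2 d r (M : {set pt d r}) : Prop :=
  forall (j : 'I_d) (c : 'I_r.+1), exists2 w, w \in M & w j = c.

Definition P3 d r (M : {set pt d r}) : Prop :=
  forall S : {set pt d r}, S \subset M -> #|S| = r.+2 ->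
    exists S' : {set pt d r}, [/\ S' \subset S, (1 < #|S'|)%N &
      forall i : 'I_d, exists x y, [/\ x \in S', y \in S', x != y, x i = y i &
                           forall z, z \in S' -> (x i <= z i)%N]].

(* A [k]^d-subarray of M (k <= r) is given by strictly increasing maps
   f i : [k] -> [r] (f i is the inverse of the order-preserving bijection
   A_i -> [k], A_i = image of f i). *)
Definition embed d k r (f : 'I_d -> 'I_k.+1 -> 'I_r.+1) (y : pt d k) : pt d r :=
  [ffun i => f i (y i)].

Definition subarray d k r (M : {set pt d r}) (f : 'I_d -> 'I_k.+1 -> 'I_r.+1)
  : {set pt d k} := [set y | embed f y \in M].

Definition strictly_increasing d k r (f : 'I_d -> 'I_k.+1 -> 'I_r.+1) : Prop :=
  forall i (a b : 'I_k.+1), (a < b)%N -> (f i a < f i b)%N.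

Definition contained_in_box d k r (N : {set pt d r}) (f : 'I_d -> 'I_k.+1 -> 'I_r.+1)
  : Prop := forall x, x \in N -> forall i, exists a, f i a = x i.

(* (P4), recursive in r (well-founded since k < r): least predicate closed under
   the defining clause; vacuous for r = 0. *)
Inductive P4 (d : nat) : forall r : nat, {set pt d r} -> Prop :=
| P4_intro (r : nat) (M : {set pt d r}) :
    (forall k, (k < r)%N -> forall N : {set pt d r}, N \subset M -> #|N| = k.+1 ->
       exists f : 'I_d -> 'I_k.+1 -> 'I_r.+1,
         [/\ strictly_increasing f, contained_in_box N f,
             P1 (subarray M f), P2 (subarray M f) &
             P3 (subarray M f) /\ P4 (subarray M f)]) ->
    P4 M.

Definition rk d r (i : 'I_d) (P : {set pt d r}) : int :=
  (#|[set (x : pt d r) i | x in P]|%:Z - 1)%R.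

Definition rankable_of_rank d r (P : {set pt d r}) (s : int) : Prop :=
  forall i : 'I_d, rk i P = s.

Definition rankable d r (P : {set pt d r}) : Prop :=
  exists s : int, rankable_of_rank P s.

Definition principal d r (P : {set pt d r}) (x : pt d r) : {set pt d r} :=
  [set y in P | ple x y].

Definition totally_rankable d r (P : {set pt d r}) : Prop :=
  forall x : pt d r, rankable (principal P x).

From mathcomp Require Import all_boot all_order all_algebra.
Set Implicit Arguments. Unset Strict Implicit. Unset Printing Implicit Defensive.

(* Induction on r, showing that in every principal subarray M[x] all
   coordinates take equally many values.  Suppose coordinate j takes s values
   in M[x] and coordinate i more; pick s+1 points N of M[x] with distinct
   i-coordinates.  If s < r, (P4) places N in a [s]^d-subarray M' satisfying
   (P2)-(P4), and x pulls back to x' with M'[x'] the preimage of M[x]: there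
   coordinate i takes at least s+1 values and coordinate j at most s, against
   the induction hypothesis.  If s = r, a point w of M outside M[x] lies
   strictly below x in some coordinate, and (P3) applied to N + w produces two
   points sharing the minimum there (impossible, only w is that small) or two
   points of N sharing an i-coordinate.  So M[x] = M, where (P2) gives r+1
   values in coordinate j. *)


Lemma exists_subset_card (T : finType) (A : {set T}) n :
  n <= #|A| -> exists2 B : {set T}, B \subset A & #|B| = n.
Proof.
case/card_geqP=> s [uniq_s size_s sub_s]; exists [set x in s].
  by apply/subsetP=> x; rewrite inE => /sub_s.
by rewrite cardsE (card_uniqP uniq_s).
Qed.

Lemma exists_imset_section (T U : finType) (f : T -> U) (A : {set T}) :
  exists B : {set T}, [/\ B \subset A, f @: B = f @: A & {in B &, injective f}].
Proof.
pose rep x := [pick y in A | f y == f x].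
have repE x y : f x = f y -> rep x = rep y.
  by move=> fxy; apply: eq_pick => z; rewrite fxy.
have repP x : x \in A -> exists2 y, rep x = Some y & y \in A /\ f y = f x.
  move=> xA; rewrite /rep; case: pickP => [y /andP [yA /eqP fyx] | /(_ x)].
    by exists y.
  by rewrite xA eqxx.
pose B := [set x in A | rep x == Some x].
have sBA : B \subset A by apply/subsetP=> x; rewrite inE => /andP [].
exists B; split=> //.
- apply/eqP; rewrite eqEsubset imsetS //=.
  apply/subsetP=> _ /imsetP [x xA ->]; have [y repx [yA fyx]] := repP x xA.
  by apply/imsetP; exists y; rewrite ?fyx // inE yA (repE y x fyx) repx eqxx.
- move=> x y; rewrite !inE => /andP [_ /eqP repx] /andP [_ /eqP repy] fxy.
  by apply: Some_inj; rewrite -repx -repy (repE x y fxy).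
Qed.

Definition coords d r (i : 'I_d) (P : {set pt d r}) : {set 'I_r.+1} :=
  [set (x : pt d r) i | x in P].

Section Coordinates.

Variables d r : nat.
Implicit Types (P N : {set pt d r}) (x : pt d r) (i j : 'I_d).

Lemma rkE i P : rk i P = (#|coords i P|%:Z - 1)%R.
Proof. by []. Qed.

Lemma card_coords_le i P : #|coords i P| <= r.+1.
Proof. by apply: leq_trans (max_card _) _; rewrite card_ord. Qed.

Lemma coordsS i P N : N \subset P -> coords i N \subset coords i P.
Proof. exact: imsetS. Qed.

Lemma exists_coord_transversal i P m : m <= #|coords i P| ->
  exists N, [/\ N \subset P, #|N| = m & #|coords i N| = m].
Proof.
have [B [sBP imB injB]] := exists_imset_section (fun x : pt d r => x i) P.
rewrite /coords -imB (card_in_imset injB) => /exists_subset_card [N sNB cN].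
exists N; split=> //; first exact: subset_trans sBP.
by rewrite (card_in_imset (sub_in2 (subsetP sNB) injB)).
Qed.

Lemma card_coords_P2 i P : P2 P -> #|coords i P| = r.+1.
Proof.
move=> P2P; apply/eqP; rewrite eqn_leq card_coords_le -{1}[r.+1]card_ord.
apply/subset_leq_card/subsetP=> c _.
by have [w wP <-] := P2P i c; apply/imsetP; exists w.
Qed.

Lemma principal_sub P x : principal P x \subset P.
Proof. by apply/subsetP=> y; rewrite inE => /andP []. Qed.

Lemma principal_leP P x y : y \in principal P x -> forall i, x i <= y i.
Proof. by rewrite inE => /andP [_ /forallP]. Qed.

End Coordinates.

Lemma P3_principal_eq d r (M N : {set pt d r}) x j :
  P3 M -> N \subset principal M x -> #|N| = r.+1 -> #|coords j N| = r.+1 ->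
  principal M x = M.
Proof.
move=> P3M sNMx cardN cardjN.
have injN : {in N &, injective (fun y : pt d r => y j)}.
  by apply/imset_injP/eqP; rewrite [#|N|]cardN.
apply/eqP; rewrite eqEsubset principal_sub /=; apply/subsetP=> w wM.
apply: contraT => wNMx.
have [i lt_wx] : exists i, w i < x i.
  move: wNMx; rewrite inE wM /ple => /forallPn [i]; rewrite -ltnNge.
  by exists i.
have wN : w \notin N by apply: contra wNMx => /(subsetP sNMx).
have sNM := subset_trans sNMx (principal_sub M x).
have sSM : w |: N \subset M by rewrite subUset sub1set wM.
have cardS : #|w |: N| = r.+2 by rewrite cardsU1 wN cardN.
have [S' [sS' _ minS']] := P3M _ sSM cardS.
case: (boolP (w \in S')) => wS'.
  have [a [b [aS' bS' neq_ab eq_abi min_a]]] := minS' i.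
  suff: a = w /\ b = w by case=> aw bw; move: neq_ab; rewrite aw bw eqxx.
  have below_x z : z \in S' -> z i < x i -> z = w.
    move=> zS' lt_zx; move: (subsetP sS' z zS'); rewrite in_setU1.
    case/predU1P=> // /(subsetP sNMx) /principal_leP /(_ i).
    by rewrite leqNgt lt_zx.
  have lt_ax : a i < x i := leq_ltn_trans (min_a w wS') lt_wx.
  by split; apply: below_x; rewrite // -?eq_abi.
have sS'N : S' \subset N.
  apply/subsetP=> z zS'; move: (subsetP sS' z zS'); rewrite in_setU1.
  by case/predU1P=> // zw; move: wS'; rewrite -zw zS'.
have [a [b [aS' bS' neq_ab eq_abj _]]] := minS' j.
by move: neq_ab; rewrite (injN a b (subsetP sS'N a aS') (subsetP sS'N b bS') eq_abj) eqxx.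
Qed.

Section Subarrays.

Variables d k r : nat.
Variable f : 'I_d -> 'I_k.+1 -> 'I_r.+1.
Hypothesis f_sinc : strictly_increasing f.
Implicit Types (P N : {set pt d r}) (x : pt d r) (y : pt d k).

Lemma leq_sinc l (a b : 'I_k.+1) : (f l a <= f l b) = (a <= b).
Proof.
case: (leqP a b) => [|lt_ba]; last by rewrite leqNgt (f_sinc l).
by rewrite leq_eqVlt => /predU1P [/val_inj -> | /(f_sinc l)/ltnW ->]; rewrite ?leqnn.
Qed.

Lemma sinc_inj l : injective (f l).
Proof. by move=> a b fab; apply/val_inj/eqP; rewrite eqn_leq -!(leq_sinc l) fab leqnn. Qed.
Arguments sinc_inj : clear implicits.

Lemma subarrayS P N : N \subset P -> subarray N f \subset subarray P f.
Proof. by move=> sNP; apply/subsetP=> y; rewrite !inE => /(subsetP sNP). Qed.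

Lemma box_embed N n : contained_in_box N f -> n \in N -> exists y, embed f y = n.
Proof.
move=> boxN nN; pose g l := odflt ord0 [pick a | f l a == n l].
have gK l : f l (g l) = n l.
  rewrite /g; case: pickP => [a /eqP // | noa].
  by have [a fa] := boxN n nN l; move: (noa a); rewrite fa eqxx.
by exists [ffun l => g l]; apply/ffunP=> l; rewrite !ffunE gK.
Qed.

Lemma card_coords_subarray l P : #|coords l (subarray P f)| <= #|coords l P|.
Proof.
rewrite -(card_imset _ (sinc_inj l)); apply/subset_leq_card/subsetP.
move=> _ /imsetP [_ /imsetP [y yP ->] ->]; rewrite inE in yP.
by apply/imsetP; exists (embed f y); rewrite ?ffunE.
Qed.

Lemma card_coords_subarray_box l N :
  contained_in_box N f -> #|coords l (subarray N f)| = #|coords l N|.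
Proof.
move=> boxN; apply/eqP; rewrite eqn_leq card_coords_subarray /=.
rewrite -(card_imset _ (sinc_inj l)); apply/subset_leq_card/subsetP.
move=> _ /imsetP [n nN ->]; have [y yn] := box_embed boxN nN.
apply/imsetP; exists (y l); first by apply/imsetP; exists y; rewrite // inE yn.
by rewrite -yn ffunE.
Qed.

Lemma principal_subarray P x y0 : ple x (embed f y0) ->
  exists x' : pt d k, principal (subarray P f) x' = subarray (principal P x) f.
Proof.
move=> /forallP le_x_y0.
have ex_l l : x l <= f l (y0 l) by move: (le_x_y0 l); rewrite ffunE.
pose x' : pt d k := [ffun l => [arg min_(a < y0 l | x l <= f l a) (a : nat)]].
have x'P l : x l <= f l (x' l) /\ forall a, x l <= f l a -> x' l <= a.
  by rewrite ffunE; case: arg_minnP.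
exists x'; apply/setP=> y; rewrite !inE; congr (_ && _).
apply/forallP/forallP=> le_y l.
- by rewrite ffunE; apply: leq_trans (proj1 (x'P l)) _; rewrite leq_sinc.
- by apply: (proj2 (x'P l)); move: (le_y l); rewrite ffunE.
Qed.

End Subarrays.

Lemma P4_principal_descent d r (M N : {set pt d r}) x s :
  P4 M -> s < r -> N \subset principal M x -> #|N| = s.+1 ->
  exists (M' : {set pt d s}) (x' : pt d s), [/\ P2 M', P3 M', P4 M' &
    forall i, #|coords i N| <= #|coords i (principal M' x')| <= #|coords i (principal M x)|].
Proof.
move=> P4M; case: P4M N x => {}r {}M P4M N x lt_sr sNMx cardN.
have sNM := subset_trans sNMx (principal_sub M x).
have [f [f_sinc boxN _ P2M' [P3M' P4M']]] := P4M s lt_sr N sNM cardN.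
have [n0 n0N] : exists n0, n0 \in N by apply/set0Pn; rewrite -card_gt0 cardN.
have [y0 y0n0] := box_embed boxN n0N.
have le_x_y0 : ple x (embed f y0).
  by rewrite y0n0; apply/forallP; apply: principal_leP (subsetP sNMx _ n0N).
have [x' principalE] := principal_subarray f_sinc M le_x_y0.
exists (subarray M f), x'; split=> // i; rewrite principalE.
rewrite -(card_coords_subarray_box f_sinc i boxN) card_coords_subarray //.
by rewrite andbT; apply/subset_leq_card/coordsS/subarrayS.
Qed.

Lemma card_coords_principal_eq d r (M : {set pt d r}) : P2 M -> P3 M -> P4 M ->
  forall x i j, #|coords i (principal M x)| = #|coords j (principal M x)|.
Proof.
elim/ltn_ind: r M => r IH M P2M P3M P4M.
suff le_ij x i j : #|coords i (principal M x)| <= #|coords j (principal M x)|.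
  by move=> x i j; apply/eqP; rewrite eqn_leq !le_ij.
rewrite leqNgt; apply/negP => lt_ji.
set s := #|coords j (principal M x)| in lt_ji.
have [N [sNMx cardN cardiN]] := exists_coord_transversal lt_ji.
have [lt_sr | le_rs] := ltnP s r.
  have [M' [x' [P2M' P3M' P4M' bounds]]] := P4_principal_descent P4M lt_sr sNMx cardN.
  have /andP [le_Ni _] := bounds i; have /andP [_ le_j] := bounds j.
  move: le_Ni; rewrite cardiN (IH s lt_sr M' P2M' P3M' P4M' x' i j).
  by rewrite leqNgt ltnS le_j.
have eq_sr : s = r.
  by apply/eqP; rewrite eqn_leq le_rs -ltnS (leq_trans lt_ji (card_coords_le _ _)).
rewrite eq_sr in cardN cardiN.
have Mx_eq := P3_principal_eq P3M sNMx cardN cardiN.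
by move: eq_sr; rewrite /s Mx_eq card_coords_P2 // => /esym /n_Sn.
Qed.

Lemma rankable_of_eq_rk d r (P : {set pt d r}) :
  (forall i j, rk i P = rk j P) -> rankable P.
Proof.
move=> eq_rk; have [i0 _ | noi] := pickP (fun _ : 'I_d => true).
- by exists (rk i0 P) => i; apply: eq_rk.
- by exists 0%R => i; move: (noi i).
Qed.

Theorem mainTheorem4 (d r : nat) (M : {set pt d r}) :
  P2 M -> P3 M -> P4 M ->
  totally_rankable M /\ rankable_of_rank M (r%:Z).
Proof.
move=> P2M P3M P4M; split=> [x | i].
  apply: rankable_of_eq_rk => i j.
  by rewrite !rkE (card_coords_principal_eq P2M P3M P4M x i j).
by rewrite rkE card_coords_P2 // -addn1 PoszD GRing.addrK.
Qed.
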